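(* Let $\alpha>1$ and $k\ge 0$ be an integer. Let $P\subset\mathbb{R}^1$ be a finite point set containing the source $s$ and let $q\in\mathbb{R}^1$ be a point with $q\notin P$. Let $\rho_{\mathrm{old}}(p)$ be the range of a point $p$ in the canonical range assignment $\rho_k(P)$ and let $\rho_{\mathrm{new}}(p)$ be the range of $p$ in $\rho_k(P\cup\{q\})$ (with the range of a point not in the set being $0$). Then $$\big|\{p\in P\cup\{q\}:\rho_{\mathrm{new}}(p)>\rho_{\mathrm{old}}(p)\}\big|\le k+3\quad\text{and}\quad \big|\{p\in P\cup\{q\}:\rho_{\mathrm{new}}(p)<\rho_{\mathrm{old}}(p)\}\big|\le k+3.$$
   Context: Setting: points in $\mathbb{R}^1$ with distance $|pq|$; a range assignment $\rho$ on a finite set $P$ containing source $s$ induces the directed graph with edge $(p,q)$ iff $|pq|\le\rho(p)$; it is feasible if this graph contains an arborescence rooted at $s$ spanning $P$; its cost is $\sum_p\rho(p)^\alpha$ with $\alpha>1$. Write $P=L\cup\{s\}\cup R$, where $L=\{\ell_1,\dots,\ell_{|L|}\}$ are the points left of $s$ and $R=\{r_1,\dots,r_{|R|}\}$ the points right of $s$, each numbered by increasing distance from $s$. $\ell_{|L|}$ and $r_{|R|}$ are extreme points. The successor of $r_i$ (non-extreme) is $r_{i+1}$, of $\ell_i$ is $\ell_{i+1}$; $s$ has successors $r_1$ and $\ell_1$; extreme points have no successor. A chain is a path in the communication graph using only edges from a point to its successor. The standard range $\rho_{\mathrm{st}}(p)$ of a non-extreme $p\neq s$ is its distance to its successor;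 of an extreme point it is $0$; $s$ has the two standard ranges $|s\ell_1|,|sr_1|$. A zero-range point is a non-extreme point with range $0$. For a broadcast tree $\mathcal{B}$ (arborescence rooted at $s$), a point of $R\cup L$ is root-crossing if it has a child on the other side of $s$; $s$ is root-crossing if it has a child in $L$ and one in $R$. Structured optimal assignment $\rho_{\mathrm{opt}}$: if all points of $P\setminus\{s\}$ lie on one side of $s$, $\rho_{\mathrm{opt}}$ gives each point its standard range (a chain from $s$ to the extreme point); otherwise $\rho_{\mathrm{opt}}$ is a minimum-cost feasible assignment whose graph contains a broadcast tree $\mathcal{B}$ with: a single root-crossing point $p^*$; a chain from $s$ to $p^*$; all points within reach of $p^*$ (i.e. at distance $\le\rho_{\mathrm{opt}}(p^* )$), except those on the chain from $s$ to $p^*$, are children of $p^*$; and, with $r_i,\ell_j$ the rightmost and leftmost points within reach of $p^*$, chains from $r_i$ to $r_{|R|}$ and from $\ell_j$ to $\ell_{|L|}$ (such an optimal assignment always exists). For each point set a fixed such $\rho_{\mathrm{opt}}$ is used. Canonical range assignment $\rho_k$: if all points of $P$ lie on one side of $s$, $\rho_k=\rho_{\mathrm{opt}}$. Otherwise let $Z$ be the set of zero-range points in $\rho_{\mathrm{opt}}(P)$; let $Z_k=Z$ if $|Z|\le k$, and otherwise let $Z_k\subseteq Z$ be the $k$ points of $Z$ with largest standard ranges (ties broken arbitrarily). Then $\rho_k(p)=\rho_{\mathrm{opt}}(p)$ for $p\in P\setminus Z$, $\rho_k(p)=0$ for $p\in Z_k$, and $\rho_k(p)=\rho_{\mathrm{st}}(p)$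 for $p\in Z\setminus Z_k$. *)

(* points of R^1 are Stdlib reals; finite point sets are
   duplicate-free lists. *)
From Stdlib Require Import Reals List Lra.
Import ListNotations.
Open Scope R_scope.

(* x^alpha for a range x >= 0 (with 0^alpha = 0, as alpha > 1). *)
Definition pw (a x : R) : R := if Rle_dec x 0 then 0 else Rpower x a.

Definition cost (a : R) (P : list R) (rho : R -> R) : R :=
  fold_right (fun p acc => pw a (rho p) + acc) 0 P.

Definition range_assignment (P : list R) (rho : R -> R) : Prop :=
  forall p, In p P -> 0 <= rho p.

(* A broadcast tree (arborescence rooted at s spanning P) contained in the
   communication graph of rho, given by its parent function:
   every p <> s in P has a parent par p in P, the edge (par p, p) is in the
   graph, and following parents from p reaches s. *)
Definition is_tree (P : list R) (s : R) (rho : R -> R) (par : R -> R) : Prop :=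
  forall p, In p P -> p <> s ->
    In (par p) P /\ Rabs (p - par p) <= rho (par p) /\
    exists n : nat, Nat.iter n par p = s.

Definition feasible (P : list R) (s : R) (rho : R -> R) : Prop :=
  exists par, is_tree P s rho par.

Definition min_cost (a : R) (P : list R) (s : R) (rho : R -> R) : Prop :=
  range_assignment P rho /\ feasible P s rho /\
  forall rho', range_assignment P rho' -> feasible P s rho' ->
    cost a P rho <= cost a P rho'.

Definition next_right (P : list R) (p x : R) : Prop :=
  In x P /\ p < x /\ forall y, In y P -> p < y -> x <= y.
Definition next_left (P : list R) (p x : R) : Prop :=
  In x P /\ x < p /\ forall y, In y P -> y < p -> y <= x.

Definition succ (P : list R) (s p x : R) : Prop :=
  (s <= p /\ next_right P p x) \/ (p <= s /\ next_left P p x).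

Definition extreme (P : list R) (s p : R) : Prop :=
  In p P /\ p <> s /\ forall x, ~ succ P s p x.

(* r is a standard range of p (unique for p <> s; s may have two) *)
Definition std (P : list R) (s p r : R) : Prop :=
  (exists x, succ P s p x /\ r = Rabs (x - p)) \/
  ((forall x, ~ succ P s p x) /\ r = 0).

Definition one_sided (P : list R) (s : R) : Prop :=
  (forall p, In p P -> s <= p) \/ (forall p, In p P -> p <= s).

Definition child (P : list R) (s : R) (par : R -> R) (x c : R) : Prop :=
  In c P /\ c <> s /\ par c = x.

Definition root_crossing (P : list R) (s : R) (par : R -> R) (x : R) : Prop :=
  (x < s /\ exists c, child P s par x c /\ s < c) \/
  (s < x /\ exists c, child P s par x c /\ c < s) \/
  (x = s /\ (exists c, child P s par x c /\ c < s)
         /\ (exists c, child P s par x c /\ s < c)).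

Definition between (u v x : R) : Prop := Rmin u v <= x <= Rmax u v.

Definition structured_opt (a : R) (P : list R) (s : R) (rho : R -> R) : Prop :=
  (one_sided P s -> forall p, In p P -> std P s p (rho p)) /\
  (~ one_sided P s ->
    min_cost a P s rho /\
    exists (par : R -> R) (pstar : R),
      is_tree P s rho par /\ In pstar P /\
      root_crossing P s par pstar /\
      (forall x, In x P -> root_crossing P s par x -> x = pstar) /\
      (* chain from s to pstar *)
      (forall x y, In x P -> x <> s -> between s pstar x -> succ P s y x ->
         par x = y) /\
      (forall x, In x P -> Rabs (x - pstar) <= rho pstar ->
         ~ between s pstar x -> par x = pstar) /\
      exists ri lj,
        In ri P /\ Rabs (ri - pstar) <= rho pstar /\
        (forall x, In x P -> Rabs (x - pstar) <= rho pstar -> x <= ri) /\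
        In lj P /\ Rabs (lj - pstar) <= rho pstar /\
        (forall x, In x P -> Rabs (x - pstar) <= rho pstar -> lj <= x) /\
        (* chains from ri to the right extreme point, lj to the left one *)
        (forall x y, In x P -> ri < x -> succ P s y x -> par x = y) /\
        (forall x y, In x P -> x < lj -> succ P s y x -> par x = y)).

(* zero-range point of rho (s never has range 0 in a feasible two-sided
   assignment, so it is excluded explicitly) *)
Definition zero_range (P : list R) (s : R) (rho : R -> R) (p : R) : Prop :=
  In p P /\ p <> s /\ ~ extreme P s p /\ rho p = 0.

(* rho is (a) canonical range assignment rho_k(P) (range 0 outside P),
   for some fixed structured optimal assignment and tie-breaking. *)
Definition canonical (a : R) (k : nat) (P : list R) (s : R) (rho : R -> R)
  : Prop :=
  exists rhoopt : R -> R,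
    structured_opt a P s rhoopt /\
    (forall p, ~ In p P -> rho p = 0) /\
    (one_sided P s -> forall p, In p P -> rho p = rhoopt p) /\
    (~ one_sided P s ->
      exists Zk : list R,
        NoDup Zk /\ (forall p, In p Zk -> zero_range P s rhoopt p) /\
        (((forall p, zero_range P s rhoopt p -> In p Zk) /\ (length Zk <= k)%nat)
         \/
         (length Zk = k /\
          forall p p' r r', In p Zk -> zero_range P s rhoopt p' -> ~ In p' Zk ->
            std P s p r -> std P s p' r' -> r' <= r)) /\
        (forall p, In p P ->
           (~ zero_range P s rhoopt p -> rho p = rhoopt p) /\
           (In p Zk -> rho p = 0) /\
           (zero_range P s rhoopt p -> ~ In p Zk -> std P s p (rho p)))).

Definition count_lt (f g : R -> R) (S : list R) : nat :=
  length (filter (fun p => if Rlt_dec (f p) (g p) then true else false) S).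

From Stdlib Require Import Reals List Lra Lia Classical.
Import ListNotations.
Open Scope R_scope.

(* In a structured optimal assignment every point other than the root-crossing point p* has
   range 0 or its standard range: a range can be lowered to the distance of the farthest child
   without breaking the broadcast tree, and away from p* the only child is the successor (for s,
   successors on one side only, as s is not root-crossing). So rho_k(P) is standard except at s,
   at p*, whose range is at least standard, and at no more than k points of range 0. Adding q changes
   the successor structure only at the predecessor w of q. Hence the ranges that decrease are
   among those of s, of the zero-range points of rho_k(P u {q}), of the old p* and of w; those
   that increase are among those of s, of the zero-range points of rho_k(P), of the new p* and of
   one of w and q: if w increases, |wq| exceeds its old range, so w has no successor in P, q is
   extreme and keeps range 0. *)

Lemma Rabs_sub_le x y r : Rabs (x - y) <= r <-> y - r <= x <= y + r.
Proof.
  split.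
  - intros H. pose proof (Rle_abs (x - y)). pose proof (Rle_abs (- (x - y))).
    rewrite Rabs_Ropp in *. lra.
  - intros H. apply Rabs_le. lra.
Qed.

Lemma pw_lt a x y : 0 < a -> 0 <= x -> x < y -> pw a x < pw a y.
Proof.
  intros Ha Hx Hxy. unfold pw, Rpower.
  destruct (Rle_dec x 0), (Rle_dec y 0); try lra.
  - apply exp_pos.
  - apply exp_increasing, Rmult_lt_compat_l, ln_increasing; lra.
Qed.

Lemma pw_le a x y : 0 < a -> 0 <= x -> x <= y -> pw a x <= pw a y.
Proof. intros Ha Hx [Hxy | <-]; [left; apply pw_lt | right]; auto. Qed.

Lemma cost_le a L r r' : 0 < a -> (forall y, In y L -> 0 <= r' y <= r y) ->
  cost a L r' <= cost a L r.
Proof.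
  intros Ha; induction L as [|b L IH]; intros H; simpl; [lra|].
  destruct (H b (or_introl eq_refl)).
  assert (pw a (r' b) <= pw a (r b)) by (apply pw_le; auto).
  assert (cost a L r' <= cost a L r) by (apply IH; intros; apply H; right; auto).
  lra.
Qed.

Lemma cost_lt a L r r' x : 0 < a -> (forall y, In y L -> 0 <= r' y <= r y) ->
  In x L -> r' x < r x -> cost a L r' < cost a L r.
Proof.
  intros Ha; induction L as [|b L IH]; intros H Hx Hlt; simpl; [destruct Hx|].
  destruct (H b (or_introl eq_refl)).
  assert (HL : forall y, In y L -> 0 <= r' y <= r y) by (intros; apply H; right; auto).
  destruct Hx as [<- | Hx].
  - assert (pw a (r' b) < pw a (r b)) by (apply pw_lt; auto).
    assert (cost a L r' <= cost a L r) by (apply cost_le; auto).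
    lra.
  - assert (pw a (r' b) <= pw a (r b)) by (apply pw_le; auto).
    assert (cost a L r' < cost a L r) by (apply IH; auto).
    lra.
Qed.

Definition update (f : R -> R) (x v : R) : R -> R :=
  fun y => if Req_dec_T y x then v else f y.

Lemma min_cost_range_le a L s rho par p v : 0 < a -> min_cost a L s rho ->
  is_tree L s rho par -> In p L -> 0 <= v ->
  (forall c, In c L -> c <> s -> par c = p -> Rabs (c - p) <= v) -> rho p <= v.
Proof.
  intros Ha [Hra [_ Hmin]] Htree Hp Hv Hchildren.
  apply Rnot_lt_le; intros Hlt.
  assert (Hra' : range_assignment L (update rho p v)).
  { intros y Hy; unfold update; destruct (Req_dec_T y p); auto. }
  assert (Hfeas : feasible L s (update rho p v)).
  { exists par; intros c Hc Hcs. destruct (Htree c Hc Hcs) as [Hpc [Hedge Hroot]].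
    repeat split; auto. unfold update; destruct (Req_dec_T (par c) p) as [e|]; auto.
    rewrite e; auto. }
  assert (cost a L (update rho p v) < cost a L rho).
  { apply cost_lt with p; auto.
    - intros y Hy; unfold update; destruct (Req_dec_T y p) as [->|]; [lra|].
      split; [apply Hra; auto | lra].
    - unfold update; destruct (Req_dec_T p p); [lra|congruence]. }
  specialize (Hmin _ Hra' Hfeas). lra.
Qed.

Lemma list_max (L : list R) (Pr : R -> Prop) : (exists z, In z L /\ Pr z) ->
  exists m, In m L /\ Pr m /\ forall z, In z L -> Pr z -> z <= m.
Proof.
  induction L as [|b L IH]; intros [z [Hz Pz]]; [destruct Hz|].
  destruct (classic (exists z, In z L /\ Pr z)) as [Hex | Hnone].
  - destruct (IH Hex) as [m [Hm [Pm Hmax]]].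
    destruct (classic (Pr b /\ m < b)) as [[Pb Hmb] | Hnot].
    + exists b; repeat split; [left; auto | auto |].
      intros y [<- | Hy] Py; [lra|]. specialize (Hmax y Hy Py); lra.
    + exists m; repeat split; [right; auto | auto |].
      intros y [<- | Hy] Py; [|auto]. apply Rnot_lt_le; auto.
  - destruct Hz as [<- | Hz]; [|exfalso; eauto].
    exists b; repeat split; [left; auto | auto |].
    intros y [<- | Hy] Py; [lra | exfalso; eauto].
Qed.

Lemma list_min (L : list R) (Pr : R -> Prop) : (exists z, In z L /\ Pr z) ->
  exists m, In m L /\ Pr m /\ forall z, In z L -> Pr z -> m <= z.
Proof.
  intros [z [Hz Pz]].
  destruct (list_max (map Ropp L) (fun y => Pr (- y))) as [m [Hm [Pm Hmax]]].
  { exists (- z); rewrite Ropp_involutive; split; [apply in_map|]; auto. }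
  apply in_map_iff in Hm as [m' [<- Hm']]. rewrite Ropp_involutive in Pm.
  exists m'; repeat split; auto.
  intros y Hy Py.
  assert (- y <= - m') by (apply Hmax; [apply in_map | rewrite Ropp_involutive]; auto).
  lra.
Qed.

Lemma succ_side L s p x : succ L s p x ->
  In x L /\ ((s <= p /\ p < x) \/ (p <= s /\ x < p)).
Proof. intros [[? [? [? _]]] | [? [? [? _]]]]; auto. Qed.

Lemma succ_neq_s L s p x : succ L s p x -> x <> s.
Proof. intros H; apply succ_side in H; lra. Qed.

Lemma succ_unique_side L s p x y : succ L s p x -> succ L s p y ->
  (p < x /\ p < y) \/ (x < p /\ y < p) -> x = y.
Proof.
  intros [[_ [Hx [Hpx Hminx]]] | [_ [Hx [Hpx Hminx]]]]
         [[_ [Hy [Hpy Hminy]]] | [_ [Hy [Hpy Hminy]]]] Hside; try lra;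
  specialize (Hminx y Hy Hpy); specialize (Hminy x Hx Hpx); lra.
Qed.

Lemma succ_unique L s p x y : p <> s -> succ L s p x -> succ L s p y -> x = y.
Proof.
  intros Hps Hx Hy. apply (succ_unique_side L s p); auto.
  destruct Hx as [[? [_ [? _]]] | [? [_ [? _]]]], Hy as [[? [_ [? _]]] | [? [_ [? _]]]];
  lra.
Qed.

Lemma std_unique L s p t t' : p <> s -> std L s p t -> std L s p t' -> t = t'.
Proof.
  intros Hps [[x [Hx ->]] | [Hn ->]] [[y [Hy ->]] | [Hm ->]].
  - rewrite (succ_unique L s p x y); auto.
  - exfalso; apply (Hm x); auto.
  - exfalso; apply (Hn y); auto.
  - reflexivity.
Qed.

Lemma std_exists L s p : exists t, std L s p t /\ 0 <= t.
Proof.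
  destruct (classic (exists x, succ L s p x)) as [[x Hx] | Hn].
  - exists (Rabs (x - p)); split; [left; eauto | apply Rabs_pos].
  - exists 0; split; [right; split | lra]; eauto.
Qed.

Lemma exists_pred L s c : In s L -> In c L -> c <> s -> exists y, succ L s y c.
Proof.
  intros Hs Hc Hcs. destruct (Rtotal_order c s) as [Hlt | [Heq | Hgt]]; [| contradiction |].
  - destruct (list_min L (fun z => c < z /\ z <= s)) as [m [Hm [[Hcm Hms] Hmin]]].
    { exists s; split; auto; lra. }
    exists m; right; repeat split; auto.
    intros z Hz Hzm. apply Rnot_lt_le; intros Hcz.
    assert (m <= z) by (apply Hmin; auto; lra). lra.
  - destruct (list_max L (fun z => s <= z /\ z < c)) as [m [Hm [[Hsm Hmc] Hmax]]].
    { exists s; split; auto; lra. }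
    exists m; left; repeat split; auto.
    intros z Hz Hzm. apply Rnot_lt_le; intros Hzc.
    assert (z <= m) by (apply Hmax; auto; lra). lra.
Qed.

Lemma pred_unique L s w w' x : w <> s -> w' <> s -> In w L -> In w' L ->
  succ L s w x -> succ L s w' x -> w = w'.
Proof.
  intros Hws Hw's Hw Hw' [[? [_ [? Hminw]]] | [? [_ [? Hminw]]]]
                          [[? [_ [? Hminw']]] | [? [_ [? Hminw']]]]; try lra;
  destruct (Rtotal_order w w') as [Hlt | [Heq | Hgt]]; auto;
  solve [specialize (Hminw w' Hw' ltac:(lra)); lra
        | specialize (Hminw' w Hw ltac:(lra)); lra].
Qed.

Lemma succ_shrink P q s p x : succ (q :: P) s p x -> In x P -> succ P s p x.
Proof.
  intros [[? [_ [? Hmin]]] | [? [_ [? Hmin]]]] Hx; [left | right];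
  repeat split; auto; intros; apply Hmin; simpl; auto.
Qed.

Lemma succ_grow P q s p x : succ P s p x ->
  succ (q :: P) s p x \/ succ (q :: P) s p q.
Proof.
  intros [[Hsp [Hx [Hpx Hmin]]] | [Hps [Hx [Hxp Hmin]]]].
  - destruct (classic (p < q < x)) as [Hq | Hq]; [right | left]; left;
    repeat split; simpl; auto; try lra; intros y [<- | Hy] Hpy;
    solve [lra | specialize (Hmin y Hy Hpy); lra | apply Rnot_lt_le; intro; apply Hq; lra].
  - destruct (classic (x < q < p)) as [Hq | Hq]; [right | left]; right;
    repeat split; simpl; auto; try lra; intros y [<- | Hy] Hyp;
    solve [lra | specialize (Hmin y Hy Hyp); lra | apply Rnot_lt_le; intro; apply Hq; lra].
Qed.

Lemma succ_closer P q s w x : w <> s -> succ (q :: P) s w q -> succ P s w x ->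
  Rabs (q - w) <= Rabs (x - w).
Proof.
  intros Hws [[? [_ [? Hmin]]] | [? [_ [? Hmin]]]] [[? [Hx [? _]]] | [? [Hx [? _]]]]; try lra;
  specialize (Hmin x (or_intror Hx)); [rewrite !Rabs_pos_eq | rewrite !Rabs_left1]; lra.
Qed.

Lemma succ_of_pred_of_new P q s w y : succ (q :: P) s w q -> succ (q :: P) s q y ->
  exists x, succ P s w x.
Proof.
  intros Hw Hq. apply succ_side in Hw as [_ Hw]. apply succ_side in Hq as [[-> | Hy] Hq]; [lra|].
  destruct Hw as [[Hsw Hwq] | [Hws Hqw]].
  - destruct (list_min P (fun z => w < z)) as [m [Hm [Hwm Hmin]]].
    { exists y; split; auto; lra. }
    exists m; left; repeat split; auto.
  - destruct (list_max P (fun z => z < w)) as [m [Hm [Hmw Hmax]]].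
    { exists y; split; auto; lra. }
    exists m; right; repeat split; auto.
Qed.

Lemma structured_opt_parent a L s rho : ~ one_sided L s -> structured_opt a L s rho ->
  min_cost a L s rho /\
  exists par pstar, is_tree L s rho par /\
    (forall x, In x L -> root_crossing L s par x -> x = pstar) /\
    forall c y, In c L -> succ L s y c ->
      par c = y \/ (par c = pstar /\ Rabs (c - pstar) <= rho pstar).
Proof.
  intros Hns [_ Hopt].
  destruct (Hopt Hns) as [Hmin [par [pstar [Htree [_ [_ [Hcross [Hchain [Hreach
    [ri [lj [_ [Hri [_ [_ [Hlj [_ [Hright Hleft]]]]]]]]]]]]]]]]]].
  split; [exact Hmin|]. exists par, pstar; split; [exact Htree|]. split; [exact Hcross|].
  intros c y Hc Hy.
  destruct (Rle_dec (Rabs (c - pstar)) (rho pstar)) as [Hin | Hout].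
  - destruct (classic (between s pstar c)) as [Hb | Hb]; [left | right]; auto.
    apply Hchain; auto. eapply succ_neq_s; eauto.
  - left. rewrite Rabs_sub_le in Hri, Hlj, Hout.
    destruct (Rlt_le_dec pstar c); [apply Hright | apply Hleft]; auto; lra.
Qed.

Section StructuredOptimum.

Variables (a : R) (L : list R) (s : R) (rho par : R -> R) (pstar : R).
Hypothesis Ha : 0 < a.
Hypothesis Hs : In s L.
Hypothesis Hmin : min_cost a L s rho.
Hypothesis Htree : is_tree L s rho par.
Hypothesis Hcross : forall x, In x L -> root_crossing L s par x -> x = pstar.
Hypothesis Hparent : forall c y, In c L -> succ L s y c ->
  par c = y \/ (par c = pstar /\ Rabs (c - pstar) <= rho pstar).

Lemma parent_succ c : In c L -> c <> s -> par c <> pstar -> succ L s (par c) c.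
Proof.
  intros Hc Hcs Hcp. destruct (exists_pred L s c Hs Hc Hcs) as [y Hy].
  destruct (Hparent c y Hc Hy) as [-> | [? _]]; tauto.
Qed.

Lemma child_unique p c c' : p <> pstar ->
  In c L -> c <> s -> par c = p -> In c' L -> c' <> s -> par c' = p -> c = c'.
Proof.
  intros Hp Hc Hcs Hcp Hc' Hc's Hc'p.
  assert (Hsc : succ L s p c) by (rewrite <- Hcp; apply parent_succ; congruence).
  assert (Hsc' : succ L s p c') by (rewrite <- Hc'p; apply parent_succ; congruence).
  destruct (Req_dec p s) as [-> | Hps]; [| eapply succ_unique; eauto].
  destruct (classic ((s < c /\ s < c') \/ (c < s /\ c' < s))) as [Hside | Hside].
  { eapply succ_unique_side; eauto. }
  (* children of [s] on both sides would make [s] root-crossing *)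
  exfalso; apply Hp, Hcross; auto. right; right; split; [reflexivity|].
  apply succ_side in Hsc as [_ Hc1]. apply succ_side in Hsc' as [_ Hc2].
  destruct (Rlt_le_dec c s);
    [ split; [exists c | exists c'] | split; [exists c' | exists c] ];
    repeat split; auto; apply NNPP; intro; apply Hside; lra.
Qed.

Lemma range_zero_or_std p : In p L -> p <> pstar -> rho p = 0 \/ std L s p (rho p).
Proof.
  intros Hp Hpp. destruct Hmin as [Hra _].
  destruct (classic (exists c, In c L /\ c <> s /\ par c = p)) as [[c [Hc [Hcs Hcp]]] | Hno].
  - right; left; exists c; split.
    + rewrite <- Hcp; apply parent_succ; congruence.
    + apply Rle_antisym.
      * apply (min_cost_range_le a L s rho par); auto; [apply Rabs_pos|].
        intros c' Hc' Hc's Hc'p. rewrite (child_unique p c' c); auto; lra.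
      * destruct (Htree c Hc Hcs) as [_ [Hedge _]]. rewrite Hcp in Hedge; exact Hedge.
  - left; apply Rle_antisym; [| apply Hra; auto].
    apply (min_cost_range_le a L s rho par); auto; [lra|].
    intros c Hc Hcs Hcp; exfalso; eauto.
Qed.

Lemma pstar_range_ge_std t : In pstar L -> std L s pstar t -> t <= rho pstar.
Proof.
  intros Hp [[c [Hc ->]] | [_ ->]]; [| apply Hmin; exact Hp].
  assert (HcL : In c L) by (apply succ_side in Hc; tauto).
  destruct (Hparent c pstar HcL Hc) as [Hcp | [_ Hreach]]; auto.
  destruct (Htree c HcL (succ_neq_s _ _ _ _ Hc)) as [_ [Hedge _]].
  rewrite Hcp in Hedge; exact Hedge.
Qed.

End StructuredOptimum.

Definition std_le (L : list R) (s p r : R) : Prop := forall t, std L s p t -> t <= r.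

(* [Z] plays the role of Z_k and [pst] that of p*; the source itself is left unconstrained. *)
Definition almost_standard (L : list R) (s : R) (r : R -> R) (Z : list R) (pst : R) : Prop :=
  forall p, In p L -> p <> s ->
    (In p Z -> r p = 0) /\
    (~ In p Z -> std_le L s p (r p) /\ (p <> pst -> std L s p (r p))).

Lemma std_le_std L s p r : p <> s -> std L s p r -> std_le L s p r.
Proof. intros Hps Hr t Ht. rewrite (std_unique L s p t r); auto; lra. Qed.

Lemma almost_standard_nonneg L s r Z pst p :
  almost_standard L s r Z pst -> In p L -> p <> s -> 0 <= r p.
Proof.
  intros Hr Hp Hps. destruct (Hr p Hp Hps) as [HZ Hstd].
  destruct (classic (In p Z)) as [Hin | Hout]; [rewrite HZ; auto; lra|].
  destruct (std_exists L s p) as [t [Ht Ht0]].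
  specialize (proj1 (Hstd Hout) t Ht); lra.
Qed.

Lemma canonical_almost_standard a k L s r : 0 < a -> In s L -> canonical a k L s r ->
  (forall p, ~ In p L -> r p = 0) /\
  exists Z pst, (length Z <= k)%nat /\ almost_standard L s r Z pst.
Proof.
  intros Ha Hs [rhoopt [Hopt [Hout [Hone Htwo]]]]. split; [exact Hout|].
  destruct (classic (one_sided L s)) as [Hos | Hts].
  - exists [], s; split; [simpl; lia|]. intros p Hp Hps; split; [intros []|].
    intros _. assert (Hstd : std L s p (r p)) by (rewrite Hone; auto; apply Hopt; auto).
    split; [apply std_le_std|]; auto.
  - destruct (structured_opt_parent a L s rhoopt Hts Hopt)
      as [Hmin [par [pstar [Htree [Hcross Hparent]]]]].
    destruct (Htwo Hts) as [Zk [_ [_ [Hlen Hval]]]].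
    exists Zk, pstar; split; [destruct Hlen as [[_ ?] | [? _]]; lia|].
    intros p Hp Hps. destruct (Hval p Hp) as [Hnz [HZ Hz]]. split; [exact HZ|].
    intros HnZ. destruct (classic (zero_range L s rhoopt p)) as [Hzr | Hnzr].
    { assert (Hstd : std L s p (r p)) by auto. split; [apply std_le_std|]; auto. }
    rewrite (Hnz Hnzr). destruct (Req_dec p pstar) as [-> | Hpp].
    { split; [| contradiction]. intros t; eapply pstar_range_ge_std; eauto. }
    assert (Hstd : std L s p (rhoopt p)).
    { destruct (range_zero_or_std a L s rhoopt par pstar) with p as [H0 | ?]; auto.
      assert (Hext : extreme L s p) by (apply NNPP; intro; apply Hnzr; repeat split; auto).
      destruct Hext as [_ [_ Hnosucc]]. right; auto. }
    split; [apply std_le_std|]; auto.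
Qed.

Lemma count_cover (f g : R -> R) L C : NoDup L ->
  (forall p, In p L -> f p < g p -> In p C) -> (count_lt f g L <= length C)%nat.
Proof.
  intros Hnd Hcover. apply NoDup_incl_length; [apply NoDup_filter; auto|].
  intros x Hx. apply filter_In in Hx as [Hx Hlt].
  destruct (Rlt_dec (f x) (g x)); [auto | discriminate].
Qed.

Lemma count_cover_unique (f g : R -> R) L C (Pr : R -> Prop) : NoDup L ->
  (forall p, In p L -> f p < g p -> In p C \/ Pr p) ->
  (forall x y, In x L -> In y L -> Pr x -> Pr y -> x = y) ->
  (count_lt f g L <= length C + 1)%nat.
Proof.
  intros Hnd Hcover Huniq.
  destruct (classic (exists x, In x L /\ Pr x)) as [[x [Hx Px]] | Hnone].
  - apply Nat.le_trans with (length (x :: C)); [| simpl; lia].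
    apply count_cover; auto. intros p Hp Hlt.
    destruct (Hcover p Hp Hlt) as [? | Pp]; [right | left]; auto.
  - apply Nat.le_trans with (length C); [| lia].
    apply count_cover; auto. intros p Hp Hlt.
    destruct (Hcover p Hp Hlt) as [? | Pp]; [auto | exfalso; eauto].
Qed.

Section Insertion.

Variables (P : list R) (s q : R) (rold rnew : R -> R) (Zo Zn : list R) (p1 p2 : R).
Hypothesis Hnd : NoDup (q :: P).
Hypothesis Hqs : q <> s.
Hypothesis Hold : almost_standard P s rold Zo p1.
Hypothesis Hnew : almost_standard (q :: P) s rnew Zn p2.
Hypothesis Hold_q : rold q = 0.

Lemma increase_new_std p : In p P -> p <> s -> p <> p2 -> rold p < rnew p ->
  std (q :: P) s p (rnew p).
Proof.
  intros Hp Hps Hp2 Hinc. destruct (Hnew p (or_intror Hp) Hps) as [HZ Hstd].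
  destruct (classic (In p Zn)) as [Hin | Hout]; [| apply Hstd; auto].
  pose proof (almost_standard_nonneg _ _ _ _ _ p Hold Hp Hps).
  rewrite HZ in Hinc; auto; lra.
Qed.

Lemma increase_pred_q p : In p P -> p <> s -> ~ In p Zo -> p <> p2 -> rold p < rnew p ->
  succ (q :: P) s p q.
Proof.
  intros Hp Hps HpZ Hp2 Hinc. pose proof (almost_standard_nonneg _ _ _ _ _ p Hold Hp Hps).
  destruct (increase_new_std p Hp Hps Hp2 Hinc) as [[x [Hx Hrx]] | [_ Hr0]]; [| lra].
  destruct (succ_side _ _ _ _ Hx) as [[-> | HxP] _]; [exact Hx | exfalso].
  assert (Rabs (x - p) <= rold p).
  { apply (Hold p Hp Hps); auto. left; exists x; split; auto. eapply succ_shrink; eauto. }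
  lra.
Qed.

Lemma pred_increase_q_extreme w : In w P -> w <> s -> ~ In w Zo -> w <> p2 ->
  succ (q :: P) s w q -> rold w < rnew w -> forall y, ~ succ (q :: P) s q y.
Proof.
  intros Hw Hws HwZ Hw2 Hwq Hinc y Hy.
  destruct (succ_of_pred_of_new P q s w y Hwq Hy) as [x Hx].
  assert (rnew w = Rabs (q - w)).
  { apply (std_unique (q :: P) s w); auto; [apply increase_new_std; auto|].
    left; exists q; auto. }
  assert (Rabs (x - w) <= rold w).
  { apply (Hold w Hw Hws); auto. left; exists x; auto. }
  pose proof (succ_closer P q s w x Hws Hwq Hx). lra.
Qed.

Lemma extreme_q_no_increase : q <> p2 -> (forall y, ~ succ (q :: P) s q y) ->
  ~ rold q < rnew q.
Proof.
  intros Hq2 Hext Hinc. destruct (Hnew q (or_introl eq_refl) Hqs) as [HZ Hstd].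
  destruct (classic (In q Zn)) as [Hin | Hout]; [rewrite HZ in Hinc; auto; lra|].
  destruct (proj2 (Hstd Hout) Hq2) as [[y [Hy _]] | [_ Hr0]]; [exact (Hext y Hy) | lra].
Qed.

Lemma decrease_pred_q p : In p (q :: P) -> p <> s -> ~ In p Zn -> p <> p1 ->
  rnew p < rold p -> succ (q :: P) s p q.
Proof.
  intros Hp Hps HpZ Hp1 Hdec. pose proof (almost_standard_nonneg _ _ _ _ _ p Hnew Hp Hps).
  destruct Hp as [<- | Hp]; [lra|].
  destruct (Hold p Hp Hps) as [HZ Hstd].
  destruct (classic (In p Zo)) as [Hin | Hout]; [rewrite HZ in Hdec; auto; lra|].
  destruct (proj2 (Hstd Hout) Hp1) as [[x [Hx Hrx]] | [_ Hr0]]; [| lra].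
  destruct (succ_grow P q s p x Hx) as [Hx' | Hq]; [exfalso | exact Hq].
  assert (Rabs (x - p) <= rnew p).
  { apply (Hnew p (or_intror Hp) Hps); auto. left; exists x; auto. }
  lra.
Qed.

Lemma count_increase_le : (count_lt rold rnew (q :: P) <= length Zo + 3)%nat.
Proof.
  replace (length Zo + 3)%nat with (length (Zo ++ [s; p2]) + 1)%nat
    by (rewrite length_app; simpl; lia).
  apply count_cover_unique with (fun p => rold p < rnew p /\ p <> p2 /\
    (p = q \/ (p <> s /\ ~ In p Zo /\ succ (q :: P) s p q))); auto.
  - intros p Hp Hinc.
    destruct (classic (In p (Zo ++ [s; p2]))) as [HC | HC]; [left; exact HC | right].
    rewrite in_app_iff in HC; simpl in HC.
    assert (Hps : p <> s) by (intros ->; tauto).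
    assert (Hp2 : p <> p2) by (intros ->; tauto).
    assert (HpZ : ~ In p Zo) by tauto.
    split; [exact Hinc|]. split; [exact Hp2|].
    destruct Hp as [<- | Hp]; [left; reflexivity | right].
    split; [|split]; auto. apply increase_pred_q; auto.
  - intros x y Hx Hy [Hxinc [Hx2 [-> | [Hxs [HxZ Hxq]]]]] [Hyinc [Hy2 [-> | [Hys [HyZ Hyq]]]]];
      auto.
    + destruct Hy as [<- | Hy]; [auto | exfalso].
      apply (extreme_q_no_increase Hx2); auto. eapply pred_increase_q_extreme; eauto.
    + destruct Hx as [<- | Hx]; [auto | exfalso].
      apply (extreme_q_no_increase Hy2); auto. eapply pred_increase_q_extreme; eauto.
    + eapply pred_unique; eauto.
Qed.

Lemma count_decrease_le : (count_lt rnew rold (q :: P) <= length Zn + 3)%nat.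
Proof.
  replace (length Zn + 3)%nat with (length (Zn ++ [s; p1]) + 1)%nat
    by (rewrite length_app; simpl; lia).
  apply count_cover_unique with (fun p => p <> s /\ succ (q :: P) s p q); auto.
  - intros p Hp Hdec.
    destruct (classic (In p (Zn ++ [s; p1]))) as [HC | HC]; [left; exact HC | right].
    rewrite in_app_iff in HC; simpl in HC.
    assert (Hps : p <> s) by (intros ->; tauto).
    split; [exact Hps|]. apply decrease_pred_q; auto; intros ->; tauto.
  - intros x y Hx Hy [Hxs Hxq] [Hys Hyq]. eapply pred_unique; eauto.
Qed.

End Insertion.

Theorem lemma1 (alpha : R) (k : nat) (P : list R) (s q : R)
  (rold rnew : R -> R) :
  1 < alpha -> NoDup P -> In s P -> ~ In q P ->
  canonical alpha k P s rold ->
  canonical alpha k (q :: P) s rnew ->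
  (count_lt rold rnew (q :: P) <= k + 3)%nat /\
  (count_lt rnew rold (q :: P) <= k + 3)%nat.
Proof.
  intros Ha Hnd Hs Hq Hcold Hcnew.
  assert (Hqs : q <> s) by (intros ->; contradiction).
  assert (HndQ : NoDup (q :: P)) by (constructor; auto).
  destruct (canonical_almost_standard alpha k P s rold ltac:(lra) Hs Hcold)
    as [Hout [Zo [p1 [HZo Hold]]]].
  destruct (canonical_almost_standard alpha k (q :: P) s rnew ltac:(lra) (or_intror Hs) Hcnew)
    as [_ [Zn [p2 [HZn Hnew]]]].
  split; eapply Nat.le_trans.
  - eapply count_increase_le; eauto.
  - lia.
  - eapply count_decrease_le; eauto.
  - lia.
Qed.
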